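(* Let $n\ge 1$ be an integer, $N=2^n$, and let $t\in[0,N)$ be a non-integer real number. Then $$\frac{1}{N}\sum_{k=0}^{N-1} p_{N,t}(k)\,\cot\!\Big((t-k)\frac{\pi}{N}\Big)=\cot(t\pi).$$
   Context: For a positive integer $N$, a non-integer real $t$ and an integer $k$, define $c_{N,t}(k)=\dfrac{1}{N}\dfrac{\sin((t-k)\pi)}{\sin\!\big((t-k)\frac{\pi}{N}\big)}$ and $p_{N,t}(k)=c_{N,t}(k)^2=\dfrac{1}{N^2}\dfrac{\sin^2((t-k)\pi)}{\sin^2\!\big((t-k)\frac{\pi}{N}\big)}$. (For $0\le k<N$ and $t\in(0,N)$ non-integer, the denominators are nonzero.) *)

From Stdlib Require Import Reals.
Open Scope R_scope.

Definition cot (x : R) : R := cos x / sin x.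

Definition c_coef (N : nat) (t : R) (k : nat) : R :=
  (1 / INR N) * (sin ((t - INR k) * PI) / sin ((t - INR k) * (PI / INR N))).

Definition p_coef (N : nat) (t : R) (k : nat) : R := (c_coef N t k) ^ 2.

Fixpoint sum_lt (n : nat) (f : nat -> R) : R :=
  match n with
  | O => 0
  | S m => sum_lt m f + f m
  end.

(* Put f(y) = cos y / sin^3 y.  The duplication formula of sin and cos gives
   8 f(2y) = f(y) + f(y - pi/2), so splitting the sum over k < 2N into even and
   odd k shows that S_N(x) = sum_{k<N} f((x - k pi)/N) satisfies S_N = N^3 f for
   every power of two N.  Since sin^2((t-k)pi) = sin^2(t pi), the summand
   p_{N,t}(k) cot((t-k)pi/N) equals sin^2(t pi)/N^2 * f((t pi - k pi)/N), and the
   left-hand side collapses to sin^2(t pi) f(t pi) = cot(t pi). *)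
From Stdlib Require Import Reals Lra Lia.
Open Scope R_scope.

Lemma sum_lt_ext (n : nat) (f g : nat -> R) :
  (forall k, (k < n)%nat -> f k = g k) -> sum_lt n f = sum_lt n g.
Proof.
  induction n as [|n IH]; intros Hfg; simpl; [reflexivity|].
  rewrite IH by (intros; apply Hfg; lia). rewrite Hfg by lia. reflexivity.
Qed.

Lemma sum_lt_mult_l (n : nat) (c : R) (f : nat -> R) :
  sum_lt n (fun k => c * f k) = c * sum_lt n f.
Proof. induction n as [|n IH]; simpl; [ring | rewrite IH; ring]. Qed.

Lemma sum_lt_even_odd (M : nat) (g : nat -> R) :
  sum_lt (2 * M) g
  = sum_lt M (fun j => g (2 * j)%nat) + sum_lt M (fun j => g (2 * j + 1)%nat).
Proof.
  induction M as [|M IH]; [simpl; ring|].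
  replace (2 * S M)%nat with (S (S (2 * M))) by lia.
  cbn -[Nat.mul]. rewrite IH.
  replace (S (2 * M)) with (2 * M + 1)%nat by lia.
  ring.
Qed.

Lemma INR_pow2_neq0 (n : nat) : INR (2 ^ n) <> 0.
Proof. apply not_0_INR, Nat.pow_nonzero. lia. Qed.

Definition cot_csc2 (y : R) : R := cos y / sin y ^ 3.

(* At the poles (sin y = 0 or cos y = 0) both sides vanish because [/ 0 = 0],
   so the formula holds for every y. *)
Lemma cot_csc2_double (y : R) :
  8 * cot_csc2 (2 * y) = cot_csc2 y + cot_csc2 (y - PI / 2).
Proof.
  unfold cot_csc2.
  rewrite sin_minus, cos_minus, sin_PI2, cos_PI2, sin_2a, cos_2a.
  replace (cos y * 0 + sin y * 1) with (sin y) by ring.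
  replace (sin y * 0 - cos y * 1) with (- cos y) by ring.
  destruct (Req_dec (sin y) 0) as [Hs|Hs].
  { rewrite Hs. replace ((2 * 0 * cos y) ^ 3) with 0 by ring.
    replace (0 ^ 3) with 0 by ring. unfold Rdiv. rewrite Rinv_0. ring. }
  destruct (Req_dec (cos y) 0) as [Hc|Hc].
  { rewrite Hc. replace ((2 * sin y * 0) ^ 3) with 0 by ring.
    replace ((- 0) ^ 3) with 0 by ring. unfold Rdiv. rewrite Rinv_0. ring. }
  assert (Hpyth := sin2_cos2 y). unfold Rsqr in Hpyth.
  rewrite <- (Rmult_1_r (cos y * cos y - sin y * sin y)), <- Hpyth.
  field. auto.
Qed.

Lemma sum_cot_csc2_double (M : nat) :
  INR M <> 0 ->
  (forall x, sum_lt M (fun k => cot_csc2 ((x - INR k * PI) / INR M))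
             = INR M ^ 3 * cot_csc2 x) ->
  forall x, sum_lt (2 * M) (fun k => cot_csc2 ((x - INR k * PI) / INR (2 * M)))
            = INR (2 * M) ^ 3 * cot_csc2 x.
Proof.
  intros HM IH x.
  rewrite sum_lt_even_odd.
  rewrite (sum_lt_ext _ _ (fun j => cot_csc2 ((x / 2 - INR j * PI) / INR M))).
  2:{ intros k _. f_equal. rewrite !mult_INR. simpl. field. auto. }
  rewrite (sum_lt_ext M (fun j => cot_csc2 ((x - INR (2 * j + 1) * PI) / INR (2 * M)))
             (fun j => cot_csc2 ((x / 2 - PI / 2 - INR j * PI) / INR M))).
  2:{ intros k _. f_equal. rewrite !mult_INR, plus_INR, mult_INR. simpl. field. auto. }
  rewrite !IH, mult_INR. simpl (INR 2).
  replace x with (2 * (x / 2)) at 3 by field.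
  replace (cot_csc2 (2 * (x / 2)))
    with ((cot_csc2 (x / 2) + cot_csc2 (x / 2 - PI / 2)) / 8)
    by (rewrite <- cot_csc2_double; field).
  field.
Qed.

Lemma sum_cot_csc2_pow2 (n : nat) (x : R) :
  sum_lt (2 ^ n) (fun k => cot_csc2 ((x - INR k * PI) / INR (2 ^ n)))
  = INR (2 ^ n) ^ 3 * cot_csc2 x.
Proof.
  revert x; induction n as [|n IH]; intros x.
  - simpl. replace ((x - 0 * PI) / 1) with x by field. ring.
  - replace (2 ^ S n)%nat with (2 * 2 ^ n)%nat by reflexivity.
    apply sum_cot_csc2_double; [apply INR_pow2_neq0 | exact IH].
Qed.

Lemma sin_sub_nat_PI_sqr (a : R) (k : nat) :
  sin (a - INR k * PI) ^ 2 = sin a ^ 2.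
Proof.
  assert (Hsin : sin (INR k * PI) = 0).
  { apply sin_eq_0_1. exists (Z.of_nat k). rewrite <- INR_IZR_INZ. reflexivity. }
  assert (Hpyth := sin2_cos2 (INR k * PI)). unfold Rsqr in Hpyth.
  rewrite Hsin in Hpyth.
  rewrite sin_minus, Hsin.
  replace ((sin a * cos (INR k * PI) - cos a * 0) ^ 2)
    with (sin a ^ 2 * (cos (INR k * PI) * cos (INR k * PI))) by ring.
  replace (cos (INR k * PI) * cos (INR k * PI)) with 1 by lra. ring.
Qed.

Lemma sin_PI_mul_neq0 (t : R) : (forall z : Z, t <> IZR z) -> sin (t * PI) <> 0.
Proof.
  intros Ht Hsin. apply sin_eq_0_0 in Hsin as [z Hz]. apply (Ht z).
  apply Rmult_eq_reg_r with PI; [exact Hz | apply Rgt_not_eq, PI_RGT_0].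
Qed.

Lemma p_coef_mul_cot (N : nat) (t : R) (k : nat) :
  INR N <> 0 ->
  p_coef N t k * cot ((t - INR k) * (PI / INR N))
  = (1 / INR N) ^ 2 * sin (t * PI) ^ 2 * cot_csc2 ((t * PI - INR k * PI) / INR N).
Proof.
  intros HN. unfold p_coef, c_coef, cot, cot_csc2.
  replace ((t - INR k) * (PI / INR N)) with ((t * PI - INR k * PI) / INR N)
    by (field; auto).
  replace ((t - INR k) * PI) with (t * PI - INR k * PI) by ring.
  rewrite <- (sin_sub_nat_PI_sqr (t * PI) k).
  unfold Rdiv. rewrite <- pow_inv. ring.
Qed.

Theorem mainTheorem1 (n : nat) (t : R) :
  (1 <= n)%nat ->
  0 <= t -> t < INR (2 ^ n) ->
  (forall z : Z, t <> IZR z) ->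
  (1 / INR (2 ^ n)) *
    sum_lt (2 ^ n) (fun k => p_coef (2 ^ n) t k * cot ((t - INR k) * (PI / INR (2 ^ n))))
  = cot (t * PI).
Proof.
  intros _ _ _ Ht.
  assert (HN := INR_pow2_neq0 n).
  assert (Hsin := sin_PI_mul_neq0 t Ht).
  rewrite (sum_lt_ext _ _ (fun k => (1 / INR (2 ^ n)) ^ 2 * sin (t * PI) ^ 2 *
             cot_csc2 ((t * PI - INR k * PI) / INR (2 ^ n))))
    by (intros k _; apply p_coef_mul_cot, HN).
  rewrite sum_lt_mult_l, sum_cot_csc2_pow2.
  unfold cot_csc2, cot. field. auto.
Qed.
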